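(* Let $n,m\in\mathbb Z$, $k\ge0$, and $a,b,q,p\in\mathbb C$ with $|p|<1$. Then \[ \binom{n+m}{k}_{a,b;q,p}=\sum_{j=0}^k\binom nj_{a,b;q,p}\binom{m}{k-j}_{aq^{2n-j},bq^{n+j};q,p}\prod_{i=1}^{k-j}W_{a,b;q,p}(i+j,n-j). \]
   Context: $\theta(x;p)=\prod_{j\ge0}(1-p^jx)(1-p^{j+1}/x)$, $\theta(x_1,\dots,x_\ell;p)=\prod_i\theta(x_i;p)$; parameters are such that denominators below do not vanish. Product convention: $\prod_{j=l}^mA_j=A_l\cdots A_m$ if $m>l-1$, $1$ if $m=l-1$, $A_{l-1}^{-1}\cdots A_{m+1}^{-1}$ if $m<l-1$. For parameters $(a,b)$: $w_{a,b;q,p}(s,t)=\frac{\theta(aq^{s+2t},bq^{2s+t-2},aq^{t-s-1}/b;p)}{\theta(aq^{s+2t-2},bq^{2s+t},aq^{t-s+1}/b;p)}q$, $W_{a,b;q,p}(s,t)=\prod_{j=1}^tw_{a,b;q,p}(s,j)=\frac{\theta(aq^{s+2t},bq^{2s},bq^{2s-1},aq^{1-s}/b,aq^{-s}/b;p)}{\theta(aq^s,bq^{2s+t},bq^{2s+t-1},aq^{1+t-s}/b,aq^{t-s}/b;p)}q^t$, and $\binom nk_{a,b;q,p}$ ($n,k\in\mathbb Z$) is the unique family with $\binom n0_{a,b;q,p}=\binom nn_{a,b;q,p}=1$ and $\binom{n+1}k_{a,b;q,p}=\binom nk_{a,b;q,p}+\binom n{k-1}_{a,b;q,p}W_{a,b;q,p}(k,n+1-k)$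 for $(n+1,k)\ne(0,0)$ (closed form $\frac{(q^{1+k},aq^{1+k},bq^{1+k},aq^{1-k}/b;q,p)_{n-k}}{(q,aq,bq^{1+2k},aq/b;q,p)_{n-k}}$ with $(x;q,p)_r=\prod_{i=0}^{r-1}\theta(xq^i;p)$). The coefficient $\binom{\cdot}{\cdot}_{aq^{2n-j},bq^{n+j};q,p}$ is this with $(a,b)$ replaced by $(aq^{2n-j},bq^{n+j})$. *)

From HB Require Import structures.
From mathcomp Require Import all_boot all_order all_algebra.
From mathcomp Require Import complex.
From mathcomp Require Import all_classical all_reals all_analysis.
Set Implicit Arguments. Unset Strict Implicit. Unset Printing Implicit Defensive.
Import Order.TTheory GRing.Theory Num.Theory.
Import numFieldTopology.Exports.
Local Open Scope ring_scope.
Local Open Scope complex_scope.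
Local Open Scope classical_set_scope.

(* The (metric) topology of the numClosedField R[i] (induced by the modulus). *)
HB.instance Definition _ (R : realType) :=
  PseudoPointedMetric.copy R[i] (R[i] : numClosedFieldType)^o.

Section Elliptic.
Variable R : realType.
Local Notation C := R[i].

Definition theta_partial (x p : C) (N : nat) : C :=
  \prod_(j < N) ((1 - p ^+ j * x) * (1 - p ^+ j.+1 / x)).

Definition theta (x p : C) : C := limn (theta_partial x p).

(* Product convention:  prod_{j=l}^m A_j  for integers l, m:
   A_l ... A_m if m > l-1; 1 if m = l-1; A_{l-1}^{-1} ... A_{m+1}^{-1} if m < l-1. *)
Definition sprod (l m : int) (A : int -> C) : C :=
  if (l - 1 <= m)%R then \prod_(i < absz (m - l + 1)%R) A (l + i%:Z)
  else \prod_(i < absz (l - 1 - m)%R) (A (m + 1 + i%:Z))^-1.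

(* The corresponding additive convention (used to telescope the recurrence):
   sum_{j=l}^m A_j = A_l + ... + A_m if m > l-1; 0 if m = l-1;
   -(A_{m+1} + ... + A_{l-1}) if m < l-1. *)
Definition ssum (l m : int) (A : int -> C) : C :=
  if (l - 1 <= m)%R then \sum_(i < absz (m - l + 1)%R) A (l + i%:Z)
  else - \sum_(i < absz (l - 1 - m)%R) A (m + 1 + i%:Z).

Definition ew (a b q p : C) (s t : int) : C :=
  (theta (a * q ^ (s + 2 * t)) p * theta (b * q ^ (2 * s + t - 2)) p
     * theta (a * q ^ (t - s - 1) / b) p)
  / (theta (a * q ^ (s + 2 * t - 2)) p * theta (b * q ^ (2 * s + t)) p
     * theta (a * q ^ (t - s + 1) / b) p) * q.

Definition eW (a b q p : C) (s t : int) : C := sprod 1 t (fun j => ew a b q p s j).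

(* The elliptic binomial coefficient binom(n,k)_{a,b;q,p} for n : int and k >= 0.
   It is the restriction to k >= 0 of the unique family with
   binom(n,0) = binom(n,n) = 1 and
   binom(n+1,k) = binom(n,k) + binom(n,k-1) W(k,n+1-k)  ((n+1,k) <> (0,0)).
   For k >= 1, the recurrence determines column k from column k-1 up to the
   normalisation binom(k,k) = 1, which gives (telescoping, with the above
   convention for signed sums)
     binom(n,k) = 1 + sum_{l=k}^{n-1} binom(l,k-1) W(k, l+1-k). *)
Fixpoint ebinom (a b q p : C) (n : int) (k : nat) : C :=
  match k with
  | 0%N => 1
  | k'.+1 => 1 + ssum k'.+1%:Z (n - 1)
                   (fun l => ebinom a b q p l k' * eW a b q p k'.+1%:Z (l - k'%:Z))
  end.

End Elliptic.

From HB Require Import structures.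
From mathcomp Require Import all_boot all_order all_algebra.
From mathcomp Require Import complex.
From mathcomp Require Import all_classical all_reals all_analysis.
From mathcomp Require Import zify ring.
Import Order.TTheory GRing.Theory Num.Theory.
Import numFieldTopology.Exports.
Local Open Scope ring_scope.
Local Open Scope complex_scope.

(* Fix n and let m vary. The Pascal recurrence [ebinomS] determines
   binom(n+m, k+1) from binom(n+m-1, k+1) and binom(n+m-1, k), with the weight
   W(k+1, n+m-1-k). The right-hand side obeys the same recurrence in m: apply
   Pascal to the shifted coefficient binom(m, k+1-j)_{aq^(2n-j), bq^(n+j)} and
   note that the shifted weights are shifted windows of the unshifted w's, so
   the two weight products merge into the single W(k+1, n+m-1-k) [eW_shiftM].
   Induction on k and the agreement at m = 0 (where binom(0, r) = 0 for r > 0)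
   give the identity for every integer m. *)

Lemma int_shift_invariant (T : Type) (h : int -> T) :
  (forall m, h (m + 1) = h m) -> forall m, h m = h 0.
Proof.
move=> hS; elim/int_rec => [//| m IH | m IH].
- by rewrite -IH -[h m]hS; congr h; lia.
- by rewrite -IH -(hS (- m.+1%:Z)); congr h; lia.
Qed.

Section SignedRanges.
Context {R : realType}.
Local Notation C := R[i].
Implicit Types (l m : int) (A : int -> C).

Lemma eq_sprod l m A B : A =1 B -> sprod l m A = sprod l m B.
Proof. by move=> eAB; rewrite /sprod; case: ifP => _; apply: eq_bigr => i _; rewrite eAB. Qed.

Lemma sprod_addz l m c A : sprod l m (fun x => A (x + c)) = sprod (l + c) (m + c) A.
Proof.
rewrite /sprod.
have -> : (l + c - 1 <= m + c) = (l - 1 <= m) by apply/idP/idP; lia.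
have -> : m + c - (l + c) + 1 = m - l + 1 by lia.
have -> : l + c - 1 - (m + c) = l - 1 - m by lia.
by case: ifP => _; apply: eq_bigr => i _; [congr (A _) | congr ((A _)^-1)]; lia.
Qed.

Lemma sprod_nil m A : sprod (m + 1) m A = 1.
Proof.
rewrite /sprod ifT; last by lia.
have -> : m - (m + 1) + 1 = 0 by lia.
by rewrite big_ord0.
Qed.

Lemma sprod_recr l m A : (forall x, A x != 0) ->
  sprod l (m + 1) A = sprod l m A * A (m + 1).
Proof.
move=> A_neq0; rewrite /sprod.
case: (lerP (l - 1) m) => [le_lm | lt_ml].
  rewrite ifT; last by lia.
  have -> : absz (m + 1 - l + 1)%R = (absz (m - l + 1)%R).+1 by lia.
  by rewrite big_ord_recr /=; congr (_ * A _); lia.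
case: (lerP (l - 1) (m + 1)) => [le_lm1 | lt_m1l].
  have -> : absz (m + 1 - l + 1)%R = 0%N by lia.
  have -> : absz (l - 1 - m)%R = 1%N by lia.
  by rewrite big_ord0 big_ord1 addr0 mulVf.
have -> : absz (l - 1 - m)%R = (absz (l - 1 - (m + 1))%R).+1 by lia.
rewrite big_ord_recl /= mulrC mulrA addr0 mulfV // mul1r.
by apply: eq_bigr => i _; congr ((A _)^-1); rewrite /bump /=; lia.
Qed.

Lemma sprod_cat l m1 m2 A : (forall x, A x != 0) ->
  sprod l m1 A * sprod (m1 + 1) m2 A = sprod l m2 A.
Proof.
move=> A_neq0.
pose h d := sprod l m1 A * sprod (m1 + 1) (m1 + d) A / sprod l (m1 + d) A.
have sprod_neq0 x y : sprod x y A != 0.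
  by rewrite /sprod; case: ifP => _; apply/prodf_neq0 => i _; rewrite ?invr_eq0.
suff: h (m2 - m1) = 1.
  by rewrite /h (_ : m1 + (m2 - m1) = m2); [move/divr1_eq | lia].
rewrite (@int_shift_invariant _ h) /h ?addr0 ?sprod_nil ?mulr1 ?mulfV //.
by move=> d; rewrite addrA !sprod_recr // mulrA -mulf_div divff ?mulr1.
Qed.

Lemma ssum_recr l m A : ssum l (m + 1) A = ssum l m A + A (m + 1).
Proof.
rewrite /ssum.
case: (lerP (l - 1) m) => [le_lm | lt_ml].
  rewrite ifT; last by lia.
  have -> : absz (m + 1 - l + 1)%R = (absz (m - l + 1)%R).+1 by lia.
  by rewrite big_ord_recr /=; congr (_ + A _); lia.
case: (lerP (l - 1) (m + 1)) => [le_lm1 | lt_m1l].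
  have -> : absz (m + 1 - l + 1)%R = 0%N by lia.
  have -> : absz (l - 1 - m)%R = 1%N by lia.
  by rewrite big_ord0 big_ord1 addr0 addNr.
have -> : absz (l - 1 - m)%R = (absz (l - 1 - (m + 1))%R).+1 by lia.
rewrite big_ord_recl /= [m + 1 + 0%N]addr0.
rewrite (opprD (A (m + 1))) (addrAC (- A (m + 1))) addNr add0r.
by congr (- _); apply: eq_bigr => i _; congr (A _); rewrite /bump /=; lia.
Qed.

End SignedRanges.

Lemma mulr_expfzD (F : fieldType) (x q : F) e1 e2 e : q != 0 -> e1 + e2 = e ->
  x * q ^ e1 * q ^ e2 = x * q ^ e.
Proof. by move=> q_neq0 <-; rewrite -mulrA -expfzDr. Qed.

Lemma mulr_expfzDB (F : fieldType) (x y q : F) e1 e2 e3 e : q != 0 ->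
  e1 + e2 - e3 = e -> x * q ^ e1 * q ^ e2 / (y * q ^ e3) = x * q ^ e / y.
Proof.
by move=> q_neq0 <-; rewrite !expfzDr // -invr_expz invfM; ring.
Qed.

Section EllipticBinomial.
Variable R : realType.
Local Notation C := R[i].
Variables (a b q p : C).

Lemma eW0 s : eW a b q p s 0 = 1.
Proof. exact: (sprod_nil 0). Qed.

Lemma ebinomS (n : int) k :
  ebinom a b q p (n + 1) k.+1
  = ebinom a b q p n k.+1 + ebinom a b q p n k * eW a b q p k.+1%:Z (n - k%:Z).
Proof.
rewrite /= [n + 1 - 1](_ : _ = n - 1 + 1); last by lia.
by rewrite ssum_recr addrA (_ : n - 1 + 1 = n); last by lia.
Qed.

Lemma ebinomnn (k : nat) : ebinom a b q p k k = 1.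
Proof.
case: k => [//|k] /=; rewrite /ssum lexx.
by rewrite (_ : k.+1%:Z - 1 - k.+1%:Z + 1 = 0); [rewrite big_ord0 addr0 | lia].
Qed.

Lemma ebinom_small (l k : nat) : (l < k)%N -> ebinom a b q p l k = 0.
Proof.
elim: k l => [//|k IHk] l lt_lk.
suff below_k d : ebinom a b q p (k - d)%N k.+1 = 0.
  by rewrite -(subKn (lt_lk : (l <= k)%N)).
elim: d => [|d IHd].
  have := ebinomS k k; rewrite subn0 subrr eW0 mulr1 -PoszD addn1 !ebinomnn.
  by move/eqP; rewrite eq_sym -subr_eq0 addrK => /eqP.
have [lt_dk | le_kd] := ltnP d k; last by rewrite (_ : (k - d.+1 = k - d)%N) //; lia.
have := ebinomS (k - d.+1)%N k; rewrite IHk ?mul0r ?addr0; last by lia.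
rewrite -PoszD (_ : (k - d.+1 + 1 = k - d)%N) ?IHd; last by lia.
by move=> <-.
Qed.

End EllipticBinomial.

Section Convolution.
Variable R : realType.
Local Notation C := R[i].
Variables (a b q p : C).
Hypotheses (q_neq0 : q != 0)
  (theta_a_neq0 : forall i : int, theta (a * q ^ i) p != 0)
  (theta_b_neq0 : forall i : int, theta (b * q ^ i) p != 0)
  (theta_ab_neq0 : forall i : int, theta (a * q ^ i / b) p != 0).

Lemma ew_neq0 s t : ew a b q p s t != 0.
Proof. by rewrite /ew !mulf_neq0 ?invr_neq0 ?mulf_neq0. Qed.

Lemma ew_shift (n j s t : int) :
  ew (a * q ^ (2 * n - j)) (b * q ^ (n + j)) q p s t = ew a b q p (s + j) (t + (n - j)).
Proof.
rewrite /ew; congr (_ * _ * _ / (_ * _ * _) * _); congr (theta _ p).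
all: first [apply: mulr_expfzDB | apply: mulr_expfzD]; by [|lia].
Qed.

Lemma eW_shiftM (n j s t : int) :
  eW (a * q ^ (2 * n - j)) (b * q ^ (n + j)) q p s t * eW a b q p (s + j) (n - j)
  = eW a b q p (s + j) (n - j + t).
Proof.
rewrite /eW; under eq_sprod do rewrite ew_shift.
rewrite sprod_addz mulrC (addrC 1).
by rewrite sprod_cat 1?addrC // => x; apply: ew_neq0.
Qed.

Variable n : int.

Definition ebinom_conv_term (m : int) (k j : nat) : C :=
  ebinom a b q p n j
  * ebinom (a * q ^ (2 * n - j%:Z)) (b * q ^ (n + j%:Z)) q p m (k - j)
  * \prod_(1 <= i < (k - j).+1) eW a b q p (i + j)%:Z (n - j%:Z).

Definition ebinom_conv (m : int) (k : nat) : C :=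
  \sum_(j < k.+1) ebinom_conv_term m k j.

Lemma ebinom_conv_termS m k j : (j <= k)%N ->
  ebinom_conv_term (m + 1) k.+1 j = ebinom_conv_term m k.+1 j
    + ebinom_conv_term m k j * eW a b q p k.+1%:Z (n + m - k%:Z).
Proof.
move=> le_jk.
have prodS : \prod_(1 <= i < (k - j).+2) eW a b q p (i + j)%:Z (n - j%:Z)
    = (\prod_(1 <= i < (k - j).+1) eW a b q p (i + j)%:Z (n - j%:Z))
      * eW a b q p k.+1%:Z (n - j%:Z).
  by rewrite big_nat_recr // (_ : ((k - j).+1 + j = k.+1)%N) //; lia.
have shiftM := eW_shiftM n j%:Z (k - j).+1%:Z (m - (k - j)%N%:Z).
rewrite (_ : (k - j).+1%:Z + j%:Z = k.+1) in shiftM; last by lia.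
rewrite (_ : n - j%:Z + (m - (k - j)%N%:Z) = n + m - k%:Z) in shiftM; last by lia.
rewrite /ebinom_conv_term subSn // ebinomS prodS -shiftM.
ring.
Qed.

Lemma ebinom_convS m k :
  ebinom_conv (m + 1) k.+1
  = ebinom_conv m k.+1 + ebinom_conv m k * eW a b q p k.+1%:Z (n + m - k%:Z).
Proof.
rewrite /ebinom_conv big_ord_recr [in RHS]big_ord_recr /= big_distrl /=.
under eq_bigr => j _ do [rewrite ebinom_conv_termS; last exact: ltn_ord j].
have top_term : ebinom_conv_term (m + 1) k.+1 k.+1 = ebinom_conv_term m k.+1 k.+1.
  by rewrite /ebinom_conv_term subnn.
by rewrite big_split top_term /= addrAC.
Qed.

Lemma ebinom_conv0 k : ebinom_conv 0 k = ebinom a b q p n k.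
Proof.
rewrite /ebinom_conv big_ord_recr /= big1 => [|j _].
  by rewrite /ebinom_conv_term subnn big_geq // add0r !mulr1.
by rewrite /ebinom_conv_term ebinom_small ?subn_gt0 // mulr0 mul0r.
Qed.

Lemma ebinomD m k : ebinom a b q p (n + m) k = ebinom_conv m k.
Proof.
elim: k m => [|k IHk] m.
  by rewrite /ebinom_conv big_ord1 /ebinom_conv_term big_geq // !mulr1.
pose h x := ebinom a b q p (n + x) k.+1 - ebinom_conv x k.+1.
apply/eqP; rewrite -subr_eq0 -/(h m) (@int_shift_invariant _ h) /h.
  by rewrite addr0 ebinom_conv0 subrr.
by move=> x; rewrite addrA ebinomS ebinom_convS IHk; ring.
Qed.

End Convolution.

Theorem corollary4 (R : realType) (n m : int) (k : nat) (a b q p : R[i])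
  (hp : `|p| < 1)
  (ha : a != 0) (hb : b != 0) (hq : q != 0)
  (hta : forall i : int, theta (a * q ^ i) p != 0)
  (htb : forall i : int, theta (b * q ^ i) p != 0)
  (htab : forall i : int, theta (a * q ^ i / b) p != 0) :
  ebinom a b q p (n + m) k =
  \sum_(j < k.+1)
     ebinom a b q p n j
     * ebinom (a * q ^ (2 * n - j%:Z)) (b * q ^ (n + j%:Z)) q p m (k - j)
     * \prod_(1 <= i < (k - j).+1) eW a b q p (i + j)%:Z (n - j%:Z).
Proof.
exact: ebinomD.
Qed.
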